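(* The Shapley–Shubik index satisfies the weak subadditivity blocker postulate but not the strong one. That is: (a) For every SVG $\mathcal{G}$ on $N$ and every bloc $I\subseteq N$ all of whose members are YES-blockers, or all of whose members are NO-blockers, we have $\widehat{SS}_I\le \sum_{k\in I} SS_k(\mathcal{G})$. (b) There exist an SVG $\mathcal{G}$ and a bloc $I$ containing a YES-blocker with $\widehat{SS}_I> \sum_{k\in I} SS_k(\mathcal{G})$.
   Context: A simple voting game (SVG) is a pair $\mathcal{G}=(N,\mathcal{W})$ with $N$ a nonempty finite set of $n$ players and $\mathcal{W}\subseteq 2^N$ (the winning sets) such that: - $\mathcal{W}$ is monotone: $S\in\mathcal{W}$ and $S\subseteq T$ imply $T\in\mathcal{W}$; - $\emptyset\notin\mathcal{W}$ and $N\in\mathcal{W}$. A division is an ordered pair $(S,N\setminus S)$ with $S\subseteq N$, where $S$ is the set of YES-voters. Player $k$ is YES-decisive in $(S,N\setminus S)$ if $k\in S\in\mathcal{W}$ and $S\setminus\{k\}\notin\mathcal{W}$. The Shapley–Shubik index is $$SS_k=\sum_{S\subseteq N:\ k\text{ YES-decisive in }S}\frac{(|S|-1)!\,(n-|S|)!}{n!}.$$ Equivalently, $SS_k$ is the fraction of orderings of $N$ in which $k$ is pivotal, i.e. is the first player whose addition to its predecessors makes the set winning. Blockers: a player $b$ is a YES-blocker if $b\in S$ for all $S\in\mathcal{W}$, and a NO-blocker if $b\notin S$ for all $S\notin\mathcal{W}$. Bloc game: for a bloc $I\subseteq N$ with a lead member $i\in I$, the bloc game $\hat{\mathcal{G}}$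 has player set $(N\setminus I)\cup\{i\}$ and winning sets $$\{S\cup\{i\}: S\subseteq N\setminus I,\ S\cup I\in\mathcal{W}\}\cup\{S: S\subseteq N\setminus I,\ S\in\mathcal{W}\}.$$ $\widehat{SS}_I$ is the index of $i$ in $\hat{\mathcal{G}}$. *)

From mathcomp Require Import all_boot all_order all_algebra.
Set Implicit Arguments. Unset Strict Implicit. Unset Printing Implicit Defensive.
Import Order.TTheory GRing.Theory Num.Theory.

Section SVG.
Variable T : finType.

Definition svg (N : {set T}) (W : {set {set T}}) : Prop :=
  [/\ N != set0,
      (forall S : {set T}, S \in W -> S \subset N),
      (forall S S' : {set T}, S \in W -> S \subset S' -> S' \subset N -> S' \in W),
      set0 \notin W &
      N \in W].

Definition yes_decisive (W : {set {set T}}) (k : T) (S : {set T}) : bool :=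
  [&& k \in S, S \in W & S :\ k \notin W].

Definition SS (N : {set T}) (W : {set {set T}}) (k : T) : rat :=
  \sum_(S in powerset N | yes_decisive W k S)
     (((#|S|.-1)`! * (#|N| - #|S|)`!)%:R / (#|N|`!)%:R)%R.

Definition yes_blocker (N : {set T}) (W : {set {set T}}) (b : T) : Prop :=
  b \in N /\ forall S : {set T}, S \in W -> b \in S.

Definition no_blocker (N : {set T}) (W : {set {set T}}) (b : T) : Prop :=
  b \in N /\ forall S : {set T}, S \subset N -> S \notin W -> b \notin S.

Definition bloc_players (N I : {set T}) (i : T) : {set T} :=
  (N :\: I) :|: [set i].

Definition bloc_W (N : {set T}) (W : {set {set T}}) (I : {set T}) (i : T)
  : {set {set T}} :=
  [set S in powerset (bloc_players N I i) |
     if i \in S then (S :\ i) :|: I \in W else S \in W].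

Definition SS_bloc (N : {set T}) (W : {set {set T}}) (I : {set T}) (i : T) : rat :=
  SS (bloc_players N I i) (bloc_W N W I i) i.

End SVG.

(* Write R := N \ I and |I| = p + 1.  When all members of I are YES-blockers,
   a member of I is pivotal in an ordering of N exactly when it comes last among
   I and the players of R preceding it form a set X with X u I winning; the lead
   member of the bloc is pivotal in the same situation with p = 0.  Hence both
   sides are the probability that the R-players preceding the last of p + 1
   marked players form a set of the upward closed family
   F = {X <= R : X u I wins}, with p = 0 for the bloc and p = |I| - 1 for the
   sum.  For NO-blockers the same holds with F = {X <= R : R \ X loses}, by
   reversing the orderings.  More marked players push the last one later and so
   enlarge X; an explicit coupling of p and p + 1 marked players shows that the
   probability of landing in an upward closed family is nondecreasing in p.
   For (b), with N = {0, 1, 2}, S winning iff 0 is in S and S meets {1, 2}, and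
   I = {0, 1}, the lead member is a dictator of the bloc game (index 1), whereas
   SS_0 + SS_1 = 2/3 + 1/6. *)

From mathcomp Require Import all_boot all_order all_algebra.
From mathcomp Require Import ring lra zify.
Set Implicit Arguments. Unset Strict Implicit. Unset Printing Implicit Defensive.
Import Order.TTheory GRing.Theory Num.Theory.

Lemma sum_binom_diag z p : \sum_(k < z.+1) 'C(k + p, k) = 'C(z + p.+1, z).
Proof.
elim: z => [|z IHz]; first by rewrite big_ord_recr big_ord0 /= !bin0.
by rewrite big_ord_recr /= IHz -addSnnS [in RHS]addSn binS addnC addSnnS.
Qed.

Lemma sum_binom_fact z p :
  p.+1 * \sum_(k < z.+1) 'C(z, k) * (k + p)`! * (z - k)`! = (z + p.+1)`!.
Proof.
have termE (k : 'I_z.+1) : 'C(z, k) * (k + p)`! * (z - k)`! = z`! * p`! * 'C(k + p, k).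
  have le_kz : k <= z by rewrite -ltnS.
  have := bin_fact (leq_addr p k); rewrite addKn => <-.
  rewrite -(bin_fact le_kz); ring.
rewrite (eq_bigr _ (fun k _ => termE k)) -big_distrr /= sum_binom_diag.
have := bin_fact (leq_addr p.+1 z); rewrite addKn => <-.
rewrite factS; ring.
Qed.

Local Open Scope ring_scope.

(* [pivot_weight p r z] is the probability that, in a uniformly random ordering
   of r ordinary and p.+1 marked players, the ordinary players preceding the last
   marked one form a given z-subset of the ordinary players. *)
Definition pivot_weight (p r z : nat) : rat :=
  (p.+1 * (z + p)`! * (r - z)`!)%:R / (r + p.+1)`!%:R.

(* Add a (p.+2)-th marked player to the ordering above.  [late_weight p r y z]
   is the probability that it comes last among the marked players, the ordinary
   players preceding the last of the other p.+1 form a given y-set and those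
   preceding it a given z-set; [early_weight p r y] is the probability that it
   does not come last and the ordinary players preceding the last marked player
   form a given y-set.  Summing out the position of the new marked player, resp.
   of the old ones, gives the two identities below, which couple [pivot_weight p]
   with [pivot_weight p.+1]. *)
Definition late_weight (p r y z : nat) : rat :=
  (p.+1 * (y + p)`! * (z - y)`! * (r - z)`!)%:R / (r + p.+2)`!%:R.

Definition early_weight (p r y : nat) : rat :=
  (p.+1 * (y + p.+1)`! * (r - y)`!)%:R / (r + p.+2)`!%:R.

Lemma late_weight_ge0 p r y z : 0 <= late_weight p r y z.
Proof. by rewrite divr_ge0 ?ler0n. Qed.

Lemma eq_ratio_nat (a b c d : nat) :
  (0 < b)%N -> (0 < d)%N -> (a * d = c * b)%N -> a%:R / b%:R = c%:R / d%:R :> rat.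
Proof.
move=> b_gt0 d_gt0 eq_ad_cb.
by apply/eqP; rewrite eqr_div ?pnatr_eq0 -?lt0n // -!natrM eq_ad_cb.
Qed.

Lemma pivot_weight_sum_late p r y l : (l + y)%N = r ->
  \sum_(k < l.+1) late_weight p r y (k + y) *+ 'C(l, k) + early_weight p r y
  = pivot_weight p r y.
Proof.
move=> def_r.
have termE (k : 'I_l.+1) : late_weight p r y (k + y) *+ 'C(l, k) =
    (p.+1 * (y + p)`! * l`!)%:R / (r + p.+2)`!%:R.
  have le_kl : (k <= l)%N by rewrite -ltnS.
  rewrite /late_weight -[_ *+ 'C(_, _)]mulr_natl mulrA -natrM; congr (_%:R / _).
  rewrite addnK -def_r subnDr -(bin_fact le_kl); ring.
rewrite (eq_bigr _ (fun k _ => termE k)) sumr_const card_ord -[_ *+ l.+1]mulr_natl.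
rewrite /early_weight mulrA -natrM -mulrDl -natrD /pivot_weight -def_r addnK.
apply: eq_ratio_nat; rewrite ?fact_gt0 //.
by rewrite !addnS !factS; ring.
Qed.

Lemma pivot_weightS_sum_late p r z :
  \sum_(k < z.+1) late_weight p r k z *+ 'C(z, k) + early_weight p r z
  = pivot_weight p.+1 r z.
Proof.
have termE (k : 'I_z.+1) : late_weight p r k z *+ 'C(z, k) =
    ('C(z, k) * (k + p)`! * (z - k)`! * (p.+1 * (r - z)`!))%:R / (r + p.+2)`!%:R.
  by rewrite /late_weight -[_ *+ 'C(_, _)]mulr_natl mulrA -natrM; congr (_%:R / _); ring.
rewrite (eq_bigr _ (fun k _ => termE k)) -mulr_suml -natr_sum -big_distrl /=.
rewrite /early_weight -mulrDl -natrD /pivot_weight; congr (_%:R / _).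
have := sum_binom_fact z p; set s := \sum_(k < z.+1) _ => def_s.
by rewrite -def_s; ring.
Qed.

Section SubsetSums.
Variables (T : finType) (V : nmodType).

Lemma disjoint_setDl (A B : {set T}) : [disjoint A :\: B & B].
Proof. by rewrite disjoints_subset setDE subsetIr. Qed.

Lemma disjoint_set1 (A : {set T}) x : x \notin A -> [disjoint A & [set x]].
Proof. by rewrite disjoint_sym disjoints1. Qed.

Lemma card_disjointU (A B : {set T}) : [disjoint A & B] -> #|A :|: B| = (#|A| + #|B|)%N.
Proof. by move=> dAB; rewrite cardsU (disjoint_setI0 dAB) cards0 subn0. Qed.

Lemma card_setD_sub (A B : {set T}) : B \subset A -> #|A :\: B| = (#|A| - #|B|)%N.
Proof. by move=> sBA; rewrite cardsD (setIidPr sBA). Qed.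

Lemma card_setD_add (A B : {set T}) : B \subset A -> #|A| = (#|A :\: B| + #|B|)%N.
Proof. by move=> sBA; rewrite card_setD_sub // subnK // subset_leq_card. Qed.

Lemma reindex_setU (R J : {set T}) (P : pred {set T}) (g : {set T} -> V) :
  [disjoint R & J] ->
  \sum_(S : {set T} | [&& S \subset R :|: J, J \subset S & P S]) g S
  = \sum_(X : {set T} | (X \subset R) && P (X :|: J)) g (X :|: J).
Proof.
move=> dRJ; rewrite (reindex_onto (fun X => X :|: J) (fun S => S :\: J)) /=.
  apply: eq_bigl => X; rewrite subsetUr /= setDUl setDv setU0 andbC andbA.
  congr (_ && _); apply/idP/idP => [/andP[/eqP/setDidPl dXJ sXRJ] | sXR].
    apply/subsetP => x Xx; have := subsetP sXRJ x.
    by rewrite !inE Xx (disjointFr dXJ Xx) !orbF; apply.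
  by rewrite setUSS // andbT; apply/eqP/setDidPl; exact: disjointWl dRJ.
by move=> S /and3P[_ sJS _]; rewrite -{2}(setID S J) (setIidPr sJS) setUC.
Qed.

Lemma sum_subsetsU1 (A : {set T}) a (g : {set T} -> V) :
  a \notin A ->
  \sum_(S : {set T} | S \subset a |: A) g S
  = \sum_(S : {set T} | S \subset A) (g S + g (a |: S)).
Proof.
move=> aA; rewrite big_split /= (bigID (fun S : {set T} => a \in S)) /= addrC; congr (_ + _).
  apply: eq_bigl => S; apply/andP/idP => [[sSaA aS] | sSA].
    apply/subsetP => x Sx; move: (subsetP sSaA x Sx); rewrite !inE.
    by case: eqP => [xa | //]; rewrite -xa Sx in aS.
  by split; [apply: subset_trans sSA (subsetUr _ _) | apply: contra (subsetP sSA a) aA].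
rewrite (eq_bigl (fun S : {set T} =>
          [&& S \subset A :|: [set a], [set a] \subset S & predT S])) => [|S]; last first.
  by rewrite sub1set andbT setUC.
rewrite reindex_setU ?disjoint_set1 //.
by apply: eq_big => [S | S _]; rewrite /= ?andbT // setUC.
Qed.

Lemma sum_subsets0 (g : {set T} -> V) :
  \sum_(S : {set T} | S \subset set0) g S = g set0.
Proof. by rewrite (eq_bigl (pred1 set0)) ?big_pred1_eq // => S; rewrite subset0. Qed.

Lemma sum_subsets_card (B : {set T}) (h : nat -> V) :
  \sum_(Y : {set T} | Y \subset B) h #|Y| = \sum_(k < #|B|.+1) h k *+ 'C(#|B|, k).
Proof.
have cardE (Y : {set T}) : Y \subset B ->
    h #|Y| = \sum_(k < #|B|.+1 | #|Y| == k) h k.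
  move=> sYB; have lt_YB : (#|Y| < #|B|.+1)%N by rewrite ltnS subset_leq_card.
  by rewrite (big_pred1 (Ordinal lt_YB)) // => k; rewrite /= eq_sym -val_eqE.
rewrite (eq_bigr _ cardE) (exchange_big_dep predT) //=; apply: eq_bigr => k _.
rewrite sumr_const -(cards_draws B k); congr (_ *+ _).
by apply: eq_card => Y; rewrite inE.
Qed.

Lemma sum_supsets_card (R Y : {set T}) (h : nat -> V) : Y \subset R ->
  \sum_(Z : {set T} | (Z \subset R) && (Y \subset Z)) h #|Z|
  = \sum_(k < (#|R| - #|Y|).+1) h (k + #|Y|)%N *+ 'C(#|R| - #|Y|, k).
Proof.
move=> sYR; have defR : (R :\: Y) :|: Y = R.
  by rewrite setUC -[in RHS](setID R Y) (setIidPr sYR).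
transitivity (\sum_(Z : {set T} | [&& Z \subset (R :\: Y) :|: Y, Y \subset Z & predT Z])
               h #|Z|).
  by apply: eq_bigl => Z; rewrite defR andbT.
rewrite reindex_setU ?disjoint_setDl //.
under eq_bigr => X /andP[sXRY _] do
  rewrite card_disjointU ?(disjointWl sXRY (disjoint_setDl R Y)) //.
under eq_bigl do rewrite andbT.
by rewrite (sum_subsets_card _ (fun k => h (k + #|Y|)%N)) card_setD_sub.
Qed.

Lemma reindex_setD (R : {set T}) (P : pred {set T}) (g : {set T} -> V) :
  \sum_(Y : {set T} | (Y \subset R) && P Y) g Y
  = \sum_(Z : {set T} | (Z \subset R) && P (R :\: Z)) g (R :\: Z).
Proof.
have setDDK (Z : {set T}) : R :\: (R :\: Z) = R :&: Z by rewrite setDDr setDv set0U.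
rewrite (reindex_onto (fun Z => R :\: Z) (fun Y => R :\: Y)) /=.
  by apply: eq_bigl => Z; rewrite subsetDl setDDK andbC (sameP eqP setIidPr).
by move=> Y /andP[sYR _]; rewrite setDDK (setIidPr sYR).
Qed.

End SubsetSums.

Section UpwardClosed.
Variables (T : finType) (R : {set T}) (P : pred {set T}).

Definition upward_closed_in := forall X Y : {set T},
  X \subset Y -> Y \subset R -> P X -> P Y.

Hypothesis P_up : upward_closed_in.

Lemma sum_upward_pairs_le (K : numDomainType) (c : {set T} -> {set T} -> K) :
  (forall X Z, 0 <= c X Z) ->
  \sum_(X : {set T} | (X \subset R) && P X)
     \sum_(Z : {set T} | (Z \subset R) && (X \subset Z)) c X Z
  <= \sum_(Z : {set T} | (Z \subset R) && P Z) \sum_(Y : {set T} | Y \subset Z) c Y Z.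
Proof.
move=> c_ge0; rewrite [leRHS](exchange_big_dep predT) //=.
rewrite [leRHS](bigID (fun X : {set T} => (X \subset R) && P X)) /= -[leLHS]addr0.
apply: lerD; last by apply: sumr_ge0 => X _; apply: sumr_ge0.
apply: ler_sum => X /andP[sXR PX].
rewrite (eq_bigl (fun Z : {set T} => ((Z \subset R) && P Z) && (X \subset Z))) => [|Z].
  exact: lexx.
case sXZ: (X \subset Z); rewrite ?andbF // !andbT.
by case sZR: (Z \subset R); rewrite //= (P_up sXZ sZR PX).
Qed.

Lemma sum_pivot_weight_upward_leS p :
  \sum_(X : {set T} | (X \subset R) && P X) pivot_weight p #|R| #|X|
  <= \sum_(X : {set T} | (X \subset R) && P X) pivot_weight p.+1 #|R| #|X|.
Proof.
have late_sum (Y : {set T}) : Y \subset R -> pivot_weight p #|R| #|Y| =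
    \sum_(Z : {set T} | (Z \subset R) && (Y \subset Z)) late_weight p #|R| #|Y| #|Z|
    + early_weight p #|R| #|Y|.
  move=> sYR; rewrite (sum_supsets_card (fun z => late_weight p #|R| #|Y| z) sYR).
  by rewrite pivot_weight_sum_late // subnK ?subset_leq_card.
have early_sum (Z : {set T}) : pivot_weight p.+1 #|R| #|Z| =
    \sum_(Y : {set T} | Y \subset Z) late_weight p #|R| #|Y| #|Z|
    + early_weight p #|R| #|Z|.
  by rewrite (sum_subsets_card _ (fun y => late_weight p #|R| y #|Z|)) pivot_weightS_sum_late.
under eq_bigr => X /andP[sXR _] do rewrite (late_sum X sXR).
under [in leRHS]eq_bigr => Z _ do rewrite early_sum.
rewrite !big_split lerD2r; apply: sum_upward_pairs_le => X Z.
exact: late_weight_ge0.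
Qed.

Lemma sum_pivot_weight_upward_le p :
  \sum_(X : {set T} | (X \subset R) && P X) pivot_weight 0 #|R| #|X|
  <= \sum_(X : {set T} | (X \subset R) && P X) pivot_weight p #|R| #|X|.
Proof.
elim: p => [|p IHp]; first exact: lexx.
exact: le_trans IHp (sum_pivot_weight_upward_leS p).
Qed.

End UpwardClosed.

Section Games.
Variable T : finType.

Definition ss_weight (n s : nat) : rat := ((s.-1)`! * (n - s)`!)%:R / n`!%:R.

Lemma SSE (N : {set T}) (W : {set {set T}}) k :
  SS N W k = \sum_(S : {set T} | (S \subset N) && yes_decisive W k S) ss_weight #|N| #|S|.
Proof. by apply: eq_bigl => S; rewrite powersetE. Qed.

Lemma ss_weight_block r p z :
  ss_weight (r + p.+1) (z + p.+1) *+ p.+1 = pivot_weight p r z.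
Proof.
rewrite /ss_weight /pivot_weight -[_ *+ p.+1]mulr_natl mulrA -natrM subnDr addnS /=.
by rewrite mulnA.
Qed.

Lemma ss_weight_compl r p z : (z <= r)%N ->
  ss_weight (r + p.+1) (r - z).+1 *+ p.+1 = pivot_weight p r z.
Proof.
move=> le_zr; rewrite /ss_weight /pivot_weight -[_ *+ p.+1]mulr_natl mulrA -natrM /=.
have -> : (r + p.+1 - (r - z).+1 = z + p)%N by lia.
by congr (_%:R / _); ring.
Qed.

Lemma ss_weight_bloc r z : ss_weight r.+1 z.+1 = pivot_weight 0 r z.
Proof. by rewrite -ss_weight_block !addn1. Qed.

Variables (N : {set T}) (W : {set {set T}}) (I : {set T}).
Let R := N :\: I.

Lemma SS_blocE i : i \in I ->
  SS_bloc N W I i = \sum_(X : {set T} | [&& X \subset R, X :|: I \in W & X \notin W])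
                      ss_weight #|R|.+1 #|X|.+1.
Proof.
move=> iI; have iR : i \notin R by rewrite inE iI.
rewrite /SS_bloc SSE /bloc_players -/R.
transitivity (\sum_(S : {set T} | [&& S \subset R :|: [set i], [set i] \subset S &
                 yes_decisive (bloc_W N W I i) i S]) ss_weight #|R :|: [set i]| #|S|).
  by apply: eq_bigl => S; rewrite sub1set /yes_decisive; case: (i \in S); rewrite ?andbF.
rewrite reindex_setU ?disjoint_set1 //.
apply: eq_big => [X | X /andP[sXR _]]; last first.
  by rewrite !card_disjointU ?cards1 ?addn1 ?disjoint_set1 // (contra (subsetP sXR i)).
case sXR: (X \subset R) => //=; have iX : i \notin X by apply: contra iR; apply: subsetP.
have sXRi : X \subset R :|: [set i] by rewrite subsetU ?sXR.
have sXiRi : i |: X \subset R :|: [set i] by rewrite setUC setSU.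
rewrite setUC /yes_decisive setU11 (setU1K iX) /bloc_W !inE /bloc_players -/R eqxx /=.
by rewrite (setU1K iX) (negbTE iX) sXiRi sXRi.
Qed.

Lemma sum_SS_yes_blockers : I \subset N -> (forall k, k \in I -> yes_blocker N W k) ->
  \sum_(k in I) SS N W k
  = \sum_(X : {set T} | (X \subset R) && (X :|: I \in W))
      ss_weight #|N| (#|X| + #|I|) *+ #|I|.
Proof.
move=> sIN yb; have defN : R :|: I = N.
  by rewrite setUC -[in RHS](setID N I) (setIidPr sIN).
rewrite sumrMnl -sumr_const; apply: eq_bigr => k kI; rewrite SSE.
transitivity (\sum_(S : {set T} | [&& S \subset R :|: I, I \subset S & S \in W])
                ss_weight #|N| #|S|).
  apply: eq_bigl => S; rewrite defN /yes_decisive.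
  case SW: (S \in W); rewrite /= ?andbF //.
  have sIS : I \subset S by apply/subsetP => j jI; apply: (yb j jI).2.
  have nW : S :\ k \notin W by apply/negP => /(yb k kI).2; rewrite setD11.
  by rewrite sIS (subsetP sIS k kI) nW !andbT.
rewrite reindex_setU ?disjoint_setDl //; apply: eq_bigr => X /andP[sXR _].
by rewrite card_disjointU // (disjointWl sXR (disjoint_setDl N I)).
Qed.

Lemma sum_SS_no_blockers : (forall k, k \in I -> no_blocker N W k) ->
  \sum_(k in I) SS N W k
  = \sum_(Y : {set T} | (Y \subset R) && (Y \notin W)) ss_weight #|N| #|Y|.+1 *+ #|I|.
Proof.
move=> nb; have winI j (S : {set T}) : j \in I -> S \subset N -> j \in S -> S \in W.
  by move=> jI sSN jS; apply/negPn/negP => /((nb j jI).2 S sSN); rewrite jS.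
rewrite sumrMnl -sumr_const; apply: eq_bigr => k kI; rewrite SSE.
have kR : k \notin R by rewrite inE kI.
transitivity (\sum_(S : {set T} | [&& S \subset R :|: [set k], [set k] \subset S &
                 S :\ k \notin W]) ss_weight #|N| #|S|).
  apply: eq_bigl => S; rewrite sub1set /yes_decisive.
  case kS: (k \in S); rewrite /= ?andbF //.
  case: (boolP (S :\ k \in W)) => [_ | nW]; rewrite ?andbF // !andbT.
  apply/andP/idP => [[sSN _] | sSRk].
    apply/subsetP => x xS; have [-> | x_neq_k] := eqVneq x k.
      by rewrite inE set11 orbT.
    have sSkN : S :\ k \subset N by apply: subset_trans (subD1set S k) sSN.
    have xSk : x \in S :\ k by rewrite !inE x_neq_k xS.
    rewrite !inE (subsetP sSN x xS) andbT; apply/orP; left; apply/negP => xI.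
    by move/negP: nW; apply; apply: (winI x).
  have sSN : S \subset N.
    apply: subset_trans sSRk _; rewrite subUset sub1set (nb k kI).1 andbT; exact: subsetDl.
  by split=> //; apply: (winI k).
rewrite reindex_setU ?disjoint_set1 //.
apply: eq_big => [Y | Y /andP[sYR _]].
  case sYR: (Y \subset R) => //=.
  by rewrite setUC setU1K // (contra (subsetP sYR k) kR).
by rewrite card_disjointU ?cards1 ?addn1 // disjoint_set1 // (contra (subsetP sYR k) kR).
Qed.

Lemma SS_bloc_le_yes_blockers i : svg N W -> I \subset N -> i \in I ->
  (forall k, k \in I -> yes_blocker N W k) -> SS_bloc N W I i <= \sum_(k in I) SS N W k.
Proof.
move=> [_ _ W_up _ _] sIN iI yb.
have W_upI : upward_closed_in R (fun X : {set T} => X :|: I \in W).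
  move=> X Y sXY sYR XIW; apply: W_up XIW _ _; first exact: setSU.
  by rewrite subUset sIN andbT (subset_trans sYR (subsetDl N I)).
have I_gt0 : (0 < #|I|)%N by apply/card_gt0P; exists i.
rewrite SS_blocE // sum_SS_yes_blockers // (card_setD_add sIN) -(prednK I_gt0).
rewrite (eq_bigl (fun X : {set T} => (X \subset R) && (X :|: I \in W))) => [|X]; last first.
  case: (boolP (X \subset R)) => //= sXR; case: (X :|: I \in W) => //=.
  by apply/negP => /(yb i iI).2 /(subsetP sXR); rewrite /R inE iI.
under eq_bigr do rewrite ss_weight_bloc.
under [in leRHS]eq_bigr do rewrite ss_weight_block.
exact: sum_pivot_weight_upward_le.
Qed.

Lemma SS_bloc_le_no_blockers i : svg N W -> I \subset N -> i \in I ->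
  (forall k, k \in I -> no_blocker N W k) -> SS_bloc N W I i <= \sum_(k in I) SS N W k.
Proof.
move=> [_ _ W_up _ _] sIN iI nb.
have W_upC : upward_closed_in R (fun Z : {set T} => R :\: Z \notin W).
  move=> X Y sXY sYR; apply: contra => RYW; apply: W_up RYW _ _; first exact: setDS.
  exact: subset_trans (subsetDl R X) (subsetDl N I).
have I_gt0 : (0 < #|I|)%N by apply/card_gt0P; exists i.
rewrite SS_blocE // sum_SS_no_blockers // (card_setD_add sIN) -(prednK I_gt0).
rewrite (eq_bigl (fun X : {set T} => (X \subset R) && (X \notin W))) => [|X]; last first.
  case: (boolP (X \subset R)) => //= sXR.
  have iXI : i \in X :|: I by rewrite inE iI orbT.
  have sXIN : X :|: I \subset N by rewrite subUset sIN (subset_trans sXR (subsetDl N I)).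
  by case: (boolP (X :|: I \in W)) => //= /((nb i iI).2 _ sXIN); rewrite iXI.
rewrite !(reindex_setD R (fun X : {set T} => X \notin W)) /=.
rewrite (eq_bigr (fun Z : {set T} => pivot_weight 0 #|R| #|Z|)) => [|Z /andP[sZR _]].
  2: by rewrite (card_setD_sub sZR) -(ss_weight_compl 0 (subset_leq_card sZR)) addn1.
rewrite [leRHS](eq_bigr (fun Z : {set T} => pivot_weight #|I|.-1 #|R| #|Z|)).
  exact: sum_pivot_weight_upward_le.
by move=> Z /andP[sZR _]; rewrite (card_setD_sub sZR) ss_weight_compl // subset_leq_card.
Qed.

End Games.

Definition o0 : 'I_3 := Ordinal (isT : (0 < 3)%N).
Definition o1 : 'I_3 := Ordinal (isT : (1 < 3)%N).
Definition o2 : 'I_3 := Ordinal (isT : (2 < 3)%N).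

Definition example_W : {set {set 'I_3}} :=
  [set S : {set 'I_3} | (o0 \in S) && ((o1 \in S) || (o2 \in S))].
Definition example_I : {set 'I_3} := o0 |: [set o1].

Lemma in_example_W S : (S \in example_W) = (o0 \in S) && ((o1 \in S) || (o2 \in S)).
Proof. by rewrite inE. Qed.

Lemma example_svg : svg [set: 'I_3] example_W.
Proof.
split=> [|S _ | S S' | |]; rewrite ?in_example_W ?in_set0 ?in_setT ?subsetT //.
- by apply/set0Pn; exists o0.
- move=> /andP[S0 S12] sSS' _; rewrite (subsetP sSS' _ S0).
  by case/orP: S12 => /(subsetP sSS') ->; rewrite ?orbT.
Qed.

Lemma example_yes_blocker : yes_blocker [set: 'I_3] example_W o0.
Proof. by split=> [|S]; rewrite ?in_setT // in_example_W => /andP[]. Qed.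

Lemma setT_ord3 : [set: 'I_3] = o0 |: (o1 |: (o2 |: set0)).
Proof. by apply/setP => x; rewrite !inE; case: x => [[|[|[|]]]]. Qed.

Lemma example_decisive0 S : yes_decisive example_W o0 S = (S \in example_W).
Proof.
rewrite /yes_decisive !in_example_W !in_setD1 eqxx /=.
by case: (o0 \in S); rewrite ?andbT ?andbF.
Qed.

Lemma example_decisive1 S :
  yes_decisive example_W o1 S = [&& o0 \in S, o1 \in S & o2 \notin S].
Proof.
rewrite /yes_decisive !in_example_W !in_setD1 eqxx /=.
by case: (o0 \in S); case: (o1 \in S); case: (o2 \in S).
Qed.

Lemma example_SS_sum : \sum_(k in example_I) SS [set: 'I_3] example_W k = 5%:R / 6%:R.
Proof.
rewrite big_setU1 ?big_set1 ?inE //= !SSE !big_mkcondr.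
under eq_bigr do rewrite example_decisive0 in_example_W.
under [X in _ + X]eq_bigr do rewrite example_decisive1.
rewrite cardsT card_ord setT_ord3.
rewrite !sum_subsetsU1 ?inE // !sum_subsets0 !(in_setU1, in_set0) /=.
rewrite !cardsU1 !(in_setU1, in_set0) cards0 /ss_weight /= !(addn0, add1n) /=.
rewrite !(subSS, subn0, subnn, factS, fact0, muln1, mul1n, natrM).
lra.
Qed.

Lemma example_rest : [set: 'I_3] :\: example_I = o2 |: set0.
Proof. by apply/setP => x; rewrite !inE; case: x => [[|[|[|]]]]. Qed.

Lemma example_SS_bloc : SS_bloc [set: 'I_3] example_W example_I o0 = 1.
Proof.
rewrite SS_blocE ?inE ?eqxx // example_rest big_mkcondr.
rewrite !sum_subsetsU1 ?inE // !sum_subsets0 !in_example_W.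
rewrite !(in_setU, in_setU1, in_set1, in_set0) /=.
rewrite !cardsU1 !(in_setU1, in_set0) cards0 /ss_weight /= !(addn0, add1n) /=.
rewrite !(subSS, subn0, subnn, factS, fact0, muln1, mul1n, natrM).
lra.
Qed.

Theorem theorem2 :
  (forall (T : finType) (N : {set T}) (W : {set {set T}}) (I : {set T}) (i : T),
     svg N W -> I \subset N -> i \in I ->
     ((forall k, k \in I -> yes_blocker N W k) \/
      (forall k, k \in I -> no_blocker N W k)) ->
     (SS_bloc N W I i <= \sum_(k in I) SS N W k)%R)
  /\
  (exists (n : nat) (N : {set 'I_n}) (W : {set {set 'I_n}}) (I : {set 'I_n}) (i : 'I_n),
     [/\ svg N W, I \subset N, i \in I,
         (exists2 b, b \in I & yes_blocker N W b) &
         (\sum_(k in I) SS N W k < SS_bloc N W I i)%R]).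
Proof.
split=> [T N W I i svgW sIN iI [yes_I | no_I] | ].
- exact: SS_bloc_le_yes_blockers.
- exact: SS_bloc_le_no_blockers.
exists 3, [set: 'I_3], example_W, example_I, o0; split.
- exact: example_svg.
- exact: subsetT.
- by rewrite !inE eqxx.
- by exists o0; [rewrite !inE eqxx | exact: example_yes_blocker].
- by rewrite example_SS_bloc example_SS_sum; lra.
Qed.
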